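(* Let $\gamma(t)$ be a curve on $S^{n-1}$, put $\omega=\frac1\varepsilon\gamma\wedge\dot\gamma$, and suppose there is $\lambda_0(t)\in so(n)$ orthogonal to $\mathbb R^n\wedge\gamma$ such that $$\frac{d}{dt}(\mathbf I\omega)=[\mathbf I\omega,\omega]+[\kappa,\omega]+\lambda_0,\qquad \dot\gamma=-\varepsilon\omega\gamma.$$ Then for all $t$ and all $\delta\gamma\in T_\gamma S^{n-1}$, $$\delta l-\mathbf{JK}(\dot\gamma,\delta\gamma)=\Big\langle\frac1{\varepsilon^2}\mathbf I(\gamma\wedge\ddot\gamma)\gamma+\frac1{\varepsilon^3}\mathbf I(\gamma\wedge\dot\gamma)\dot\gamma,\delta\gamma\Big\rangle=\mathbf f(\dot\gamma,\delta\gamma),$$ where $\delta l=\big\langle\frac{\partial l}{\partial\gamma}-\frac d{dt}\frac{\partial l}{\partial\dot\gamma},\delta\gamma\big\rangle$ and $\mathbf f(\dot\gamma,\delta\gamma)=\frac1{\varepsilon^2}\langle\dot\gamma,\kappa\delta\gamma\rangle$.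
   Context: Model of a balanced $n$-dimensional ball with a gyroscope rolling without slipping and twisting over a fixed sphere in $\mathbb R^n$ ($n\ge3$): the ball has radius $a$, mass $m$, $D=ma^2$; the sphere has radius $b$; $\varepsilon=b/(b+a)$ (ball outside the sphere) or $\varepsilon=b/(b-a)$ (ball inside the sphere, or spherical shell over a smaller sphere). On $so(n)$ use $\langle X,Y\rangle=-\frac12\operatorname{tr}(XY)$; on $\mathbb R^n$ the Euclidean product. For $x,y\in\mathbb R^n$, $x\wedge y=xy^T-yx^T\in so(n)$. $\mathbb I\colon so(n)\to so(n)$ is the inertia operator of the system and $\mathbf I=\mathbb I+D\,\mathrm{Id}_{so(n)}$, a symmetric positive definite operator; $\kappa\in so(n)$ is a fixed matrix (the gyroscope). The reduced Lagrangian on $TS^{n-1}$ is $l(\gamma,\dot\gamma)=-\frac1{2\varepsilon^2}\langle\mathbf I(\gamma\wedge\dot\gamma)\gamma,\dot\gamma\rangle$ and the $\mathbf{JK}$-term is $\mathbf{JK}(\dot\gamma,\delta\gamma)=\frac{2\varepsilon-1}{\varepsilon^3}\langle\mathbf I(\gamma\wedge\dot\gamma)\dot\gamma,\delta\gamma\rangle$. *)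

From mathcomp Require Import all_boot all_order all_algebra.
From mathcomp Require Import all_classical all_reals all_analysis.
Set Implicit Arguments. Unset Strict Implicit. Unset Printing Implicit Defensive.
Import Order.TTheory GRing.Theory Num.Theory.
Local Open Scope ring_scope.

(* Vectors of R^n are column vectors 'cV[R]_n, elements of so(n) are
   in_so-symmetric matrices in 'M[R]_n. *)

Definition wedge (R : realType) (n : nat) (x y : 'cV[R]_n) : 'M[R]_n :=
  x *m y^T - y *m x^T.

Definition dotv (R : realType) (n : nat) (x y : 'cV[R]_n) : R :=
  \sum_(i < n) x i 0 * y i 0.

Definition so_inner (R : realType) (n : nat) (X Y : 'M[R]_n) : R :=
  - (2%:R^-1 * \tr (X *m Y)).

Definition in_so (R : realType) (n : nat) (X : 'M[R]_n) : Prop := X^T = - X.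

Definition lie (R : realType) (n : nat) (X Y : 'M[R]_n) : 'M[R]_n :=
  X *m Y - Y *m X.

Definition cderive (R : realType) (n : nat) (f : R -> 'cV[R]_n) (t : R)
  : 'cV[R]_n := \col_i derive1 (fun s => f s i 0) t.
Definition mderive (R : realType) (n : nat) (f : R -> 'M[R]_n) (t : R)
  : 'M[R]_n := \matrix_(i, j) derive1 (fun s => f s i j) t.

Definition cdifferentiable (R : realType) (n : nat) (f : R -> 'cV[R]_n) : Prop :=
  forall (t : R) (i : 'I_n), derivable (fun s => f s i 0) t 1.

Definition grad (R : realType) (n : nat) (F : 'cV[R]_n -> R) (x : 'cV[R]_n)
  : 'cV[R]_n := \col_j derive1 (fun s => F (x + s *: delta_mx j 0)) 0.

Definition boldI (R : realType) (n : nat) (II : 'M[R]_n -> 'M[R]_n) (D : R)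
  (X : 'M[R]_n) : 'M[R]_n := II X + D *: X.

Definition lagr (R : realType) (n : nat) (eps : R) (I : 'M[R]_n -> 'M[R]_n)
  (x v : 'cV[R]_n) : R :=
  - ((2%:R * eps ^+ 2)^-1 * dotv (I (wedge x v) *m x) v).

Definition JK (R : realType) (n : nat) (eps : R) (I : 'M[R]_n -> 'M[R]_n)
  (x v dx : 'cV[R]_n) : R :=
  (2%:R * eps - 1) / eps ^+ 3 * dotv (I (wedge x v) *m v) dx.

Definition gyro_f (R : realType) (n : nat) (eps : R) (kappa : 'M[R]_n)
  (v dx : 'cV[R]_n) : R :=
  (eps ^+ 2)^-1 * dotv v (kappa *m dx).

(* delta l = < dl/dgamma - d/dt dl/dgammadot , dgamma > along the curve gamma at time t,
   partial derivatives taken in the ambient R^n x R^n *)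
Definition delta_l (R : realType) (n : nat) (eps : R) (I : 'M[R]_n -> 'M[R]_n)
  (gamma : R -> 'cV[R]_n) (t : R) (dx : 'cV[R]_n) : R :=
  dotv (grad (fun x => lagr eps I x (cderive gamma t)) (gamma t)
        - cderive (fun s => grad (fun v => lagr eps I (gamma s) v)
                                  (cderive gamma s)) t) dx.

From HB Require Import structures.
From mathcomp Require Import all_boot all_order all_algebra.
From mathcomp Require Import all_classical all_reals all_analysis.
From mathcomp Require Import ring lra.
Import Order.TTheory GRing.Theory Num.Theory.
Local Open Scope ring_scope.
Set Implicit Arguments. Unset Strict Implicit.

(* The Lagrangian is quadratic in the velocity, and the symmetry of I on so(n)
   gives dl/dγ = ε⁻² I(γ∧γ̇)γ̇ and dl/dγ̇ = -ε⁻² I(γ∧γ̇)γ.  As γ̇∧γ̇ = 0,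
   δl = <ε⁻² I(γ∧γ̈)γ + 2ε⁻² I(γ∧γ̇)γ̇, δγ>, and subtracting JK leaves the
   coefficient 2ε⁻² - (2ε-1)ε⁻³ = ε⁻³.  For the second identity, the constraint
   says (γ∧γ̇)γ = -γ̇, so for δγ ⊥ γ and skew A, <[A, γ∧γ̇]γ, δγ> = -<Aγ̇, δγ>.
   Pairing the Euler-Poincaré equation with γ and δγ, the multiplier λ₀ drops
   out, the inertia term cancels ε⁻³ <I(γ∧γ̇)γ̇, δγ>, and only the gyroscopic
   term survives. *)

Section InnerProducts.
Variables (R : realType) (n : nat).
Implicit Types (x y z v : 'cV[R]_n) (A B : 'M[R]_n).

Lemma dotvE x y : dotv x y = (x^T *m y) 0 0.
Proof. by rewrite /dotv mxE; apply: eq_bigr => i _; rewrite mxE. Qed.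

Lemma dotvC x y : dotv x y = dotv y x.
Proof. by rewrite /dotv; apply: eq_bigr => i _; rewrite mulrC. Qed.

Lemma dotvDl x y z : dotv (x + y) z = dotv x z + dotv y z.
Proof. by rewrite /dotv -big_split; apply: eq_bigr => i _; rewrite mxE mulrDl. Qed.

Lemma dotvZl (c : R) x z : dotv (c *: x) z = c * dotv x z.
Proof. by rewrite /dotv mulr_sumr; apply: eq_bigr => i _; rewrite mxE mulrA. Qed.

Lemma dotvNl x z : dotv (- x) z = - dotv x z.
Proof. by rewrite -scaleN1r dotvZl mulN1r. Qed.

Lemma dotvBl x y z : dotv (x - y) z = dotv x z - dotv y z.
Proof. by rewrite dotvDl dotvNl. Qed.

Lemma dotv0r x : dotv x 0 = 0.
Proof. by rewrite /dotv big1 // => i _; rewrite mxE mulr0. Qed.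

Lemma dotv_delta_mx x (j : 'I_n) : dotv x (delta_mx j 0) = x j 0.
Proof.
rewrite /dotv (bigD1 j) //= big1 ?addr0; first by rewrite mxE !eqxx mulr1.
by move=> i /negbTE ij; rewrite mxE ij mulr0.
Qed.

Lemma trmx_mul_dotv x y : x^T *m y = (dotv x y)%:M.
Proof. by apply/matrixP => i j; rewrite !ord1 dotvE [RHS]mxE eqxx mulr1n. Qed.

Lemma wedge_mulmx x y z : wedge x y *m z = dotv y z *: x - dotv x z *: y.
Proof. by rewrite /wedge mulmxBl -!mulmxA !trmx_mul_dotv !mul_mx_scalar. Qed.

Lemma wedgeC x y : wedge x y = - wedge y x.
Proof. by rewrite /wedge opprB. Qed.

Lemma wedgexx x : wedge x x = 0.
Proof. by rewrite /wedge subrr. Qed.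

Lemma wedge0l x : wedge 0 x = 0.
Proof. by rewrite /wedge trmx0 mulmx0 mul0mx subrr. Qed.

Lemma wedge0r x : wedge x 0 = 0.
Proof. by rewrite wedgeC wedge0l oppr0. Qed.

Lemma in_so_wedge x y : in_so (wedge x y).
Proof. by rewrite /in_so /wedge linearB /= !trmx_mul !trmxK opprB. Qed.

Lemma dotv_mulmx_so A x y : in_so A -> dotv (A *m x) y = - dotv x (A *m y).
Proof. by move=> A_so; rewrite !dotvE trmx_mul A_so mulmxN mulNmx -mulmxA mxE. Qed.

Lemma dotv_mulmx_so_diag A x : in_so A -> dotv x (A *m x) = 0.
Proof. by move=> A_so; have := dotv_mulmx_so x x A_so; rewrite dotvC; lra. Qed.

Lemma dotv_so_inner A x y : in_so A -> dotv y (A *m x) = so_inner A (wedge y x).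
Proof.
move=> A_so; rewrite /so_inner /wedge mulmxBr linearB /= !mulmxA.
rewrite mxtrace_mulC [\tr (A *m x *m _)]mxtrace_mulC /mxtrace !big_ord1 -!dotvE.
rewrite [dotv x (A *m y)]dotvC dotv_mulmx_so // dotvC.
by field.
Qed.

Lemma so_innerC A B : so_inner A B = so_inner B A.
Proof. by rewrite /so_inner mxtrace_mulC. Qed.

Lemma so_innerNr A B : so_inner A (- B) = - so_inner A B.
Proof. by rewrite /so_inner mulmxN linearN /= mulrN. Qed.

Lemma so_innerNl A B : so_inner (- A) B = - so_inner A B.
Proof. by rewrite so_innerC so_innerNr so_innerC. Qed.

Lemma lieZl (c : R) A B : lie (c *: A) B = c *: lie A B.
Proof. by rewrite /lie -scalemxAl -scalemxAr scalerBr. Qed.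

Lemma lieZr (c : R) A B : lie A (c *: B) = c *: lie A B.
Proof. by rewrite /lie -scalemxAl -scalemxAr scalerBr. Qed.

End InnerProducts.

Definition is_derive_mx (R : realType) p q (f : R -> 'M[R]_(p, q)) (t : R)
    (F : 'M[R]_(p, q)) :=
  forall i j, is_derive t (1 : R) (fun s => f s i j) (F i j).

Section MatrixDerivative.
Variables (R : realType) (t : R).

Lemma is_derive_fct_sum k (h : 'I_k -> R -> R) (dh : 'I_k -> R) :
  (forall i, is_derive t (1 : R) (h i) (dh i)) ->
  is_derive t (1 : R) (fun s => \sum_(i < k) h i s) (\sum_(i < k) dh i).
Proof. by move=> hh; rewrite -fct_sumE; exact: is_derive_sum. Qed.

Lemma is_derive_mx_cst p q (A : 'M[R]_(p, q)) : is_derive_mx (fun=> A) t 0.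
Proof. by move=> i j; rewrite mxE; exact: is_derive_cst. Qed.

Lemma is_derive_mx_line p q (x e : 'M[R]_(p, q)) : is_derive_mx (fun s => x + s *: e) t e.
Proof.
move=> i j; under eq_fun do rewrite !mxE mulrC.
have := is_deriveD (is_derive_cst (x i j) t 1) (is_deriveZ (e i j) (is_derive_id t 1)).
by rewrite add0r [_ *: _]mulr1.
Qed.

Lemma is_derive_mxB p q (f g : R -> 'M[R]_(p, q)) F G :
  is_derive_mx f t F -> is_derive_mx g t G ->
  is_derive_mx (fun s => f s - g s) t (F - G).
Proof.
by move=> hf hg i j; rewrite !mxE; under eq_fun do rewrite !mxE; exact: is_deriveB.
Qed.

Lemma is_derive_mxZ p q (c : R) (f : R -> 'M[R]_(p, q)) F :
  is_derive_mx f t F -> is_derive_mx (fun s => c *: f s) t (c *: F).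
Proof.
by move=> hf i j; rewrite mxE; under eq_fun do rewrite mxE; exact: is_deriveZ.
Qed.

Lemma is_derive_mx_tr p q (f : R -> 'M[R]_(p, q)) F :
  is_derive_mx f t F -> is_derive_mx (fun s => (f s)^T) t F^T.
Proof. by move=> hf i j; rewrite mxE; under eq_fun do rewrite mxE; exact: hf. Qed.

Lemma is_derive_mxM p q r (f : R -> 'M[R]_(p, q)) (g : R -> 'M[R]_(q, r)) F G :
  is_derive_mx f t F -> is_derive_mx g t G ->
  is_derive_mx (fun s => f s *m g s) t (F *m g t + f t *m G).
Proof.
move=> hf hg i j; rewrite !mxE -big_split /=; under eq_fun do rewrite mxE.
apply: is_derive_eq; first by apply: is_derive_fct_sum => k; exact: is_deriveM.
by apply: eq_bigr => k _ /=; rewrite addrC; congr (_ + _); apply: mulrC.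
Qed.

Lemma is_derive_mx_linear p q p' q' (L : {linear 'M[R]_(p, q) -> 'M[R]_(p', q')})
    (f : R -> 'M[R]_(p, q)) F :
  is_derive_mx f t F -> is_derive_mx (fun s => L (f s)) t (L F).
Proof.
move=> hf i j.
have expand X : L X i j = \sum_(k < p) \sum_(l < q) X k l * L (delta_mx k l) i j.
  rewrite {1}(matrix_sum_delta X) linear_sum summxE; apply: eq_bigr => k _.
  by rewrite linear_sum summxE; apply: eq_bigr => l _; rewrite linearZ mxE.
under eq_fun do rewrite expand; rewrite expand.
apply: is_derive_fct_sum => k; apply: is_derive_fct_sum => l.
by under eq_fun do rewrite mulrC; rewrite mulrC; exact: is_deriveZ.
Qed.

Lemma is_derive_wedge n (x y : R -> 'cV[R]_n) X Y :
  is_derive_mx x t X -> is_derive_mx y t Y ->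
  is_derive_mx (fun s => wedge (x s) (y s)) t (wedge X (y t) + wedge (x t) Y).
Proof.
move=> hx hy.
have -> : wedge X (y t) + wedge (x t) Y
        = (X *m (y t)^T + x t *m Y^T) - (Y *m (x t)^T + y t *m X^T).
  by rewrite /wedge addrACA opprD [- (Y *m _) + _]addrC.
exact: is_derive_mxB (is_derive_mxM hx (is_derive_mx_tr hy))
                     (is_derive_mxM hy (is_derive_mx_tr hx)).
Qed.

Lemma is_derive_dotv n (x y : R -> 'cV[R]_n) X Y :
  is_derive_mx x t X -> is_derive_mx y t Y ->
  is_derive t (1 : R) (fun s => dotv (x s) (y s)) (dotv X (y t) + dotv (x t) Y).
Proof.
move=> hx hy; under eq_fun do rewrite dotvE.
rewrite !dotvE; apply: is_derive_eq (is_derive_mxM (is_derive_mx_tr hx) hy 0 0) _.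
by rewrite mxE.
Qed.

End MatrixDerivative.

Section CurveDerivative.
Variables (R : realType) (n : nat).

Lemma is_derive_mx_cderive (g : R -> 'cV[R]_n) t :
  cdifferentiable g -> is_derive_mx g t (cderive g t).
Proof. by move=> hg i j; rewrite (ord1 j) mxE derive1E; exact: derivableP. Qed.

Lemma cderive_val (f : R -> 'cV[R]_n) t F : is_derive_mx f t F -> cderive f t = F.
Proof.
by move=> hf; apply/matrixP => i j; rewrite (ord1 j) mxE derive1E; have [_ ->] := hf i 0.
Qed.

Lemma mderive_val (f : R -> 'M[R]_n) t F : is_derive_mx f t F -> mderive f t = F.
Proof. by move=> hf; apply/matrixP => i j; rewrite mxE derive1E; have [_ ->] := hf i j. Qed.

Lemma is_derive_wedge_velocity (gamma : R -> 'cV[R]_n) t :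
  cdifferentiable gamma -> cdifferentiable (cderive gamma) ->
  is_derive_mx (fun s => wedge (gamma s) (cderive gamma s)) t
               (wedge (gamma t) (cderive (cderive gamma) t)).
Proof.
move=> hg hg'; rewrite -[wedge _ _]add0r -(wedgexx (cderive gamma t)).
exact: is_derive_wedge (is_derive_mx_cderive t hg) (is_derive_mx_cderive t hg').
Qed.

End CurveDerivative.

Section Inertia.
Variables (R : realType) (n : nat) (II : {linear 'M[R]_n -> 'M[R]_n}) (D : R).

Lemma boldI_is_linear : linear (boldI II D).
Proof. by move=> c X Y; rewrite /boldI linearP !scalerDr !scalerA [D * c]mulrC addrACA. Qed.

HB.instance Definition _ :=
  GRing.isLinear.Build R 'M[R]_n 'M[R]_n _ (boldI II D) boldI_is_linear.

Lemma in_so_boldI : (forall X, in_so X -> in_so (II X)) ->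
  forall X, in_so X -> in_so (boldI II D X).
Proof.
move=> II_so X X_so; rewrite /in_so /boldI linearD /= linearZ /= X_so (II_so _ X_so).
by rewrite opprD scalerN.
Qed.

End Inertia.

Section Lagrangian.
Variables (R : realType) (n : nat) (I : {linear 'M[R]_n -> 'M[R]_n}) (eps : R).
Hypothesis I_so : forall X, in_so X -> in_so (I X).
Hypothesis I_sym : forall X Y, in_so X -> in_so Y -> so_inner (I X) Y = so_inner X (I Y).

Lemma in_so_I_wedge x y : in_so (I (wedge x y)).
Proof. exact/I_so/in_so_wedge. Qed.

Lemma dotv_I_wedge a b c d : dotv d (I (wedge a b) *m c) = dotv b (I (wedge c d) *m a).
Proof.
rewrite !(dotv_so_inner _ _ (in_so_I_wedge _ _)).
rewrite (I_sym (in_so_wedge _ _) (in_so_wedge _ _)) so_innerC.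
by rewrite (wedgeC d) (wedgeC a) linearN so_innerNl so_innerNr opprK.
Qed.

Lemma is_derive_lagr (x v : R -> 'cV[R]_n) t X V :
  is_derive_mx x t X -> is_derive_mx v t V ->
  is_derive t (1 : R) (fun s => lagr eps I (x s) (v s))
    (- ((2%:R * eps ^+ 2)^-1 *
        (dotv (I (wedge X (v t) + wedge (x t) V) *m x t + I (wedge (x t) (v t)) *m X) (v t)
         + dotv (I (wedge (x t) (v t)) *m x t) V))).
Proof.
move=> hx hv.
exact: is_deriveN (is_deriveZ _ (is_derive_dotv
  (is_derive_mxM (is_derive_mx_linear I (is_derive_wedge hx hv)) hx) hv)).
Qed.

Lemma grad_lagr_pos x0 v :
  grad (fun x => lagr eps I x v) x0 = (eps ^+ 2)^-1 *: (I (wedge x0 v) *m v).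
Proof.
apply/matrixP => j k; rewrite (ord1 k) [LHS]mxE [RHS]mxE derive1E.
have [_ ->] := is_derive_lagr (is_derive_mx_line 0 x0 (delta_mx j 0)) (is_derive_mx_cst 0 v).
rewrite scale0r addr0 wedge0r addr0 dotv0r addr0 dotvDl.
rewrite dotvC dotv_I_wedge dotvC (dotv_mulmx_so _ _ (in_so_I_wedge _ _)).
rewrite dotvC dotv_delta_mx invfM; set c := (eps ^+ 2)^-1.
by field.
Qed.

Lemma grad_lagr_vel x v0 :
  grad (fun v => lagr eps I x v) v0 = - (eps ^+ 2)^-1 *: (I (wedge x v0) *m x).
Proof.
apply/matrixP => j k; rewrite (ord1 k) [LHS]mxE [RHS]mxE derive1E.
have [_ ->] := is_derive_lagr (is_derive_mx_cst 0 x) (is_derive_mx_line 0 v0 (delta_mx j 0)).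
rewrite scale0r addr0 wedge0l add0r mulmx0 addr0.
rewrite dotvC dotv_I_wedge dotvC dotv_delta_mx invfM; set c := (eps ^+ 2)^-1.
by field.
Qed.

Lemma delta_l_sub_JK (gamma : R -> 'cV[R]_n) t d :
  eps != 0 -> cdifferentiable gamma -> cdifferentiable (cderive gamma) ->
  delta_l eps I gamma t d - JK eps I (gamma t) (cderive gamma t) d
  = dotv ((eps ^+ 2)^-1 *: (I (wedge (gamma t) (cderive (cderive gamma) t)) *m gamma t)
          + (eps ^+ 3)^-1 *: (I (wedge (gamma t) (cderive gamma t)) *m cderive gamma t)) d.
Proof.
move=> eps0 hg hg'.
rewrite /delta_l grad_lagr_pos.
have -> : (fun s => grad (fun v => lagr eps I (gamma s) v) (cderive gamma s))
  = fun s => - (eps ^+ 2)^-1 *: (I (wedge (gamma s) (cderive gamma s)) *m gamma s).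
  by apply/funext => s; rewrite grad_lagr_vel.
rewrite (cderive_val (is_derive_mxZ _ (is_derive_mxM
  (is_derive_mx_linear I (is_derive_wedge_velocity t hg hg')) (is_derive_mx_cderive t hg)))).
rewrite /JK !(dotvBl, dotvDl, dotvZl, dotvNl).
by field.
Qed.

End Lagrangian.

Section GyroscopicForce.
Variables (R : realType) (n : nat) (I : {linear 'M[R]_n -> 'M[R]_n}) (eps : R).
Variable kappa : 'M[R]_n.
Hypothesis I_so : forall X, in_so X -> in_so (I X).
Hypothesis kappa_so : in_so kappa.
Implicit Types (x v a d : 'cV[R]_n) (A lambda : 'M[R]_n).

Lemma dotv_lie_wedge A x v d : in_so A -> wedge x v *m x = - v -> dotv d x = 0 ->
  dotv (lie A (wedge x v) *m x) d = - dotv (A *m v) d.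
Proof.
move=> A_so Wx dx.
rewrite /lie mulmxBl dotvBl -!mulmxA Wx mulmxN dotvNl wedge_mulmx dotvBl !dotvZl.
by rewrite dotv_mulmx_so_diag // (dotvC x d) dx mulr0 mul0r subr0 subr0.
Qed.

Lemma gyroscopic_force x v a d lambda :
  eps != 0 -> in_so lambda -> (forall y, so_inner lambda (wedge y x) = 0) ->
  wedge x v *m x = - v -> dotv d x = 0 ->
  I (eps^-1 *: wedge x a)
    = lie (I (eps^-1 *: wedge x v)) (eps^-1 *: wedge x v)
      + lie kappa (eps^-1 *: wedge x v) + lambda ->
  dotv ((eps ^+ 2)^-1 *: (I (wedge x a) *m x)
        + (eps ^+ 3)^-1 *: (I (wedge x v) *m v)) d
  = gyro_f eps kappa v d.
Proof.
move=> eps0 lambda_so lambda_normal Wx dx dyn.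
have lambda_x : dotv (lambda *m x) d = 0.
  by rewrite dotvC dotv_so_inner // lambda_normal.
have kappa_v : dotv v (kappa *m d) = - dotv (kappa *m v) d.
  by rewrite dotv_mulmx_so // opprK.
have := congr1 (fun M => dotv (M *m x) d) dyn.
rewrite /= !linearZ /= lieZl !lieZr !mulmxDl -!scalemxAl !dotvDl !dotvZl lambda_x addr0.
rewrite (dotv_lie_wedge (I_so (in_so_wedge x v)) Wx dx).
rewrite (dotv_lie_wedge kappa_so Wx dx) => {}dyn.
rewrite /gyro_f kappa_v -[dotv (I (wedge x a) *m x) d](mulVKf eps0) dyn.
by field.
Qed.

End GyroscopicForce.

Lemma rolling_ratio_neq0 (R : realType) (a b eps : R) : 0 < a -> 0 < b ->
  eps = b / (b + a) \/ (b != a /\ eps = b / (b - a)) -> eps != 0.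
Proof.
move=> a_gt0 b_gt0 [->|[ba ->]].
  by rewrite mulf_neq0 ?invr_eq0 ?lt0r_neq0 ?addr_gt0.
by rewrite mulf_neq0 ?invr_eq0 ?subr_eq0 ?lt0r_neq0.
Qed.

Theorem proposition7p3
  (R : realType) (n : nat) (hn : (3 <= n)%N)
  (a m b eps : R) (ha : 0 < a) (hm : 0 < m) (hb : 0 < b)
  (heps : eps = b / (b + a) \/ (b != a /\ eps = b / (b - a)))
  (II : {linear 'M[R]_n -> 'M[R]_n})
  (hII : forall X : 'M[R]_n, in_so X -> in_so (II X))
  (hsym : forall X Y : 'M[R]_n, in_so X -> in_so Y ->
     so_inner (boldI II (m * a ^+ 2) X) Y = so_inner X (boldI II (m * a ^+ 2) Y))
  (hpos : forall X : 'M[R]_n, in_so X -> X != 0 ->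
     0 < so_inner (boldI II (m * a ^+ 2) X) X)
  (kappa : 'M[R]_n) (hkappa : in_so kappa)
  (gamma : R -> 'cV[R]_n)
  (hsphere : forall t, dotv (gamma t) (gamma t) = 1)
  (hdiff1 : cdifferentiable gamma)
  (hdiff2 : cdifferentiable (cderive gamma))
  (hdyn : forall t : R, exists lambda0 : 'M[R]_n,
     [/\ in_so lambda0,
         (forall x : 'cV[R]_n, so_inner lambda0 (wedge x (gamma t)) = 0)
       & mderive (fun s => boldI II (m * a ^+ 2)
                   (eps^-1 *: wedge (gamma s) (cderive gamma s))) t
         = lie (boldI II (m * a ^+ 2) (eps^-1 *: wedge (gamma t) (cderive gamma t)))
               (eps^-1 *: wedge (gamma t) (cderive gamma t))
           + lie kappa (eps^-1 *: wedge (gamma t) (cderive gamma t))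
           + lambda0])
  (hconstr : forall t : R, cderive gamma t
     = - eps *: ((eps^-1 *: wedge (gamma t) (cderive gamma t)) *m gamma t)) :
  forall (t : R) (dgamma : 'cV[R]_n), dotv dgamma (gamma t) = 0 ->
    delta_l eps (boldI II (m * a ^+ 2)) gamma t dgamma
      - JK eps (boldI II (m * a ^+ 2)) (gamma t) (cderive gamma t) dgamma
    = dotv ((eps ^+ 2)^-1 *: (boldI II (m * a ^+ 2)
               (wedge (gamma t) (cderive (cderive gamma) t)) *m gamma t)
            + (eps ^+ 3)^-1 *: (boldI II (m * a ^+ 2)
               (wedge (gamma t) (cderive gamma t)) *m cderive gamma t)) dgamma
    /\
    dotv ((eps ^+ 2)^-1 *: (boldI II (m * a ^+ 2)
               (wedge (gamma t) (cderive (cderive gamma) t)) *m gamma t)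
            + (eps ^+ 3)^-1 *: (boldI II (m * a ^+ 2)
               (wedge (gamma t) (cderive gamma t)) *m cderive gamma t)) dgamma
    = gyro_f eps kappa (cderive gamma t) dgamma.
Proof.
move=> t d dx.
have eps0 := rolling_ratio_neq0 ha hb heps.
have I_so := in_so_boldI (m * a ^+ 2) hII.
split; first exact: delta_l_sub_JK.
have [lambda [lambda_so lambda_normal dyn]] := hdyn t.
rewrite (mderive_val (is_derive_mx_linear _
  (is_derive_mxZ _ (is_derive_wedge_velocity t hdiff1 hdiff2)))) in dyn.
have omega_gamma : wedge (gamma t) (cderive gamma t) *m gamma t = - cderive gamma t.
  by rewrite {2}(hconstr t) -scalemxAl scalerA mulNr divff // scaleN1r opprK.
by apply: (gyroscopic_force I_so hkappa eps0 lambda_so lambda_normal omega_gamma dx).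
Qed.
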